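(* For every positive integer $m$, $$G_{-m}(\lambda)=(1+\zeta)^{m+1}\sum_{k=1}^m\left\{\!\left\{{m+k\atop k}\right\}\!\right\}\zeta^k,\qquad\text{where }\zeta=\frac{\lambda}{1-\lambda},$$ as an identity of formal power series (equivalently, of rational functions) in $\lambda$.
   Context: For an integer $m$ let $R_m(z)=\sum_{n\ge1} n^{n-m}\frac{z^n}{n!}$. Let $T(z)=\sum_{n\ge1}n^{n-1}\frac{z^n}{n!}$, which satisfies $T(z)=z e^{T(z)}$, so its compositional inverse is $z=\lambda e^{-\lambda}$. Define $G_m(\lambda):=R_m(\lambda e^{-\lambda})$, so $G_m(T(z))=R_m(z)$; then $\zeta=\lambda/(1-\lambda)$ equals $G_0(\lambda)$. The second-order Stirling numbers (associated Stirling numbers of the second kind) $\{\{{n\atop k}\}\}$ are the numbers of partitions of an $n$-element set into $k$ blocks each of size at least $2$; equivalently $\{\{{0\atop 0}\}\}=1$, $\{\{{n\atop k}\}\}=0$ when $n<0$ or $k\le 0$ with $(n,k)\neq(0,0)$, and $\{\{{n\atop k}\}\}=k\{\{{n-1\atop k}\}\}+(n-1)\{\{{n-2\atop k-1}\}\}$ for $n\ge1$. *)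

From mathcomp Require Import all_boot all_order all_algebra.
Set Implicit Arguments. Unset Strict Implicit. Unset Printing Implicit Defensive.
Import Order.TTheory GRing.Theory Num.Theory.
Local Open Scope ring_scope.

Definition fps := nat -> rat.

Definition fone : fps := fun n => (n == 0%N)%:R.
Definition fX : fps := fun n => (n == 1%N)%:R.
Definition fadd (f g : fps) : fps := fun n => f n + g n.
Definition fmul (f g : fps) : fps :=
  fun n => \sum_(i < n.+1) f i * g (n - i)%N.
Fixpoint fpow (f : fps) (k : nat) : fps :=
  if k is k'.+1 then fmul f (fpow f k') else fone.

(* composition g(f), for f with zero constant term:
   [x^n] g(f) = sum_{k<=n} g_k [x^n] f^k  (terms k>n vanish since f 0 = 0) *)
Definition fcomp (g f : fps) : fps :=
  fun n => \sum_(k < n.+1) g k * fpow f k n.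

Definition fexpneg : fps := fun n => (-1) ^+ n / (n`!)%:R.
Definition flamexp : fps := fmul fX fexpneg.

Definition Rser (m : int) : fps :=
  fun n => if n is 0%N then 0 else (n%:R : rat) ^ (n%:Z - m) / (n`!)%:R.

Definition Gser (m : int) : fps := fcomp (Rser m) flamexp.

(* zeta = lambda/(1-lambda) = lambda * sum_j lambda^j *)
Definition fgeom : fps := fun _ => 1.
Definition zeta : fps := fmul fX fgeom.

(* second-order (associated) Stirling numbers of the second kind, via
   S(0,0)=1, S(n,k)=0 if k<=0 and (n,k)<>(0,0),
   S(n,k) = k S(n-1,k) + (n-1) S(n-2,k-1) for n>=1 (S(-1,_)=0). *)
Fixpoint stirling2nd (n k : nat) {struct n} : nat :=
  match n with
  | 0%N => (k == 0%N)
  | n1.+1 =>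
      match n1 with
      | 0%N => 0%N
      | n2.+1 =>
          match k with
          | 0%N => 0%N
          | k1.+1 => (k * stirling2nd n1 k + n1 * stirling2nd n2 k1)%N
          end
      end
  end.

(* Since [λ^N] (λ e^{-λ})^n = (-n)^{N-n} / (N-n)!, the coefficient of λ^N in
   G_{-m} is the finite difference (1/N!) Σ_n (-1)^{N-n} C(N,n) n^{N+m}, i.e. the
   Stirling number S(N+m, N).  On the other side 1 + ζ = 1/(1-λ) and ζ = λ/(1-λ),
   so [λ^N] (1+ζ)^{m+1} ζ^k = C(N+m, m+k); modulo λ^{N+1} these series are the
   polynomials w = 1 + λ + ... + λ^N and w - 1 ≡ λ w.  The theorem thus reduces to
   S(N+m, N) = Σ_k C(N+m, m+k) {{m+k, k}}: choose the m+k elements lying in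
   non-singleton blocks and partition them into k blocks of size at least 2. *)

From mathcomp Require Import all_boot all_order all_algebra.
From mathcomp Require Import zify ring.
Import GRing.Theory Num.Theory.

Lemma big_nat_trunc {R : Type} {idx : R} (op : Monoid.law idx) a b (F : nat -> R) :
  (a <= b)%N -> (forall i, (a <= i < b)%N -> F i = idx) ->
  \big[op/idx]_(0 <= i < b) F i = \big[op/idx]_(0 <= i < a) F i.
Proof.
move=> le_ab F0; rewrite (@big_cat_nat _ _ _ a 0 b) //=.
rewrite -[RHS](Monoid.mulm1 op); congr (op _ _).
by rewrite big_nat_cond big1 // => i /andP[/F0].
Qed.

Lemma stirling2ndSS n k : stirling2nd n.+2 k.+1 =
  (k.+1 * stirling2nd n.+1 k.+1 + n.+1 * stirling2nd n k)%N.
Proof. by []. Qed.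

Lemma stirling2ndS0 n : stirling2nd n.+1 0 = 0%N.
Proof. by case: n. Qed.

Lemma stirling2nd_small n k : (n < 2 * k)%N -> stirling2nd n k = 0%N.
Proof.
elim: n {-2}n (leqnn n) k => [|M IH] [|[|n]] // le_nM [|k] // lt_n2k.
by rewrite stirling2ndSS !IH //; lia.
Qed.

Lemma bin_stirling2ndSS n m j :
  ('C(n, m + j.+1) * stirling2nd (m.+1 + j.+1) j.+1 =
   j.+1 * ('C(n, m + j.+1) * stirling2nd (m + j.+1) j.+1)
   + (n - (m + j)) * ('C(n, m + j) * stirling2nd (m + j) j))%N.
Proof.
rewrite addSn !addnS stirling2ndSS mulnDr mulnCA; congr (_ + _)%N.
by rewrite mulnCA !mulnA mulnC mul_bin_left mulnC.
Qed.

Fixpoint stirling2 (p N : nat) : nat :=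
  match p, N with
  | 0, 0 => 1
  | 0, _.+1 | _.+1, 0 => 0
  | p'.+1, N'.+1 => N'.+1 * stirling2 p' N'.+1 + stirling2 p' N'
  end.

Lemma stirling2_small p N : (p < N)%N -> stirling2 p N = 0%N.
Proof. by elim: p N => [|p IH] [|N] //= lt_pN; rewrite !IH //; lia. Qed.

Lemma stirling2nn N : stirling2 N N = 1%N.
Proof. by elim: N => //= N ->; rewrite stirling2_small ?muln0. Qed.

(* Partitions of an (N + m)-set into N blocks, counted by the number k of
   blocks of size at least 2: these blocks cover m + k elements. *)
Definition split_singletons (m N : nat) : nat :=
  \sum_(0 <= k < N.+1) 'C(N + m, m + k) * stirling2nd (m + k) k.

Lemma split_singletons_widen m N B : (N < B)%N ->
  split_singletons m N = \sum_(0 <= k < B) 'C(N + m, m + k) * stirling2nd (m + k) k.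
Proof.
move=> lt_NB; rewrite (big_nat_trunc _ _ _ _ lt_NB) // => k /andP[lt_Nk _].
by rewrite bin_small ?mul0n //; lia.
Qed.

Lemma split_singletons0 N : split_singletons 0 N = 1%N.
Proof.
rewrite /split_singletons big_nat_recl // big1_seq ?addn0 ?bin0 // => k _.
by rewrite stirling2nd_small ?muln0 //; lia.
Qed.

Lemma split_singletonsSS m N : split_singletons m.+1 N.+1 =
  (split_singletons m.+1 N + N.+1 * split_singletons m N.+1)%N.
Proof.
set n := (N + m.+1)%N; set u := fun k => ('C(n, m + k) * stirling2nd (m + k) k)%N.
rewrite !(@split_singletons_widen _ _ N.+3) //; last by rewrite ltnS leqW.
have pascal k : ('C(N.+1 + m.+1, m.+1 + k) * stirling2nd (m.+1 + k) k =
    'C(N + m.+1, m.+1 + k) * stirling2nd (m.+1 + k) k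
    + 'C(n, m + k) * stirling2nd (m.+1 + k) k)%N.
  by rewrite -mulnDl !addSn.
rewrite (eq_bigr _ (fun k _ => pascal k)) big_split; congr (_ + _)%N.
have -> : (N.+1 + m = n)%N by rewrite /n; lia.
rewrite big_nat_recl // stirling2ndS0 muln0 Monoid.mul1m.
under eq_bigr => j _ do rewrite bin_stirling2ndSS -/(u j.+1) -/(u j).
rewrite big_split /=.
have -> : (\sum_(0 <= j < N.+2) j.+1 * u j.+1 = \sum_(0 <= k < N.+3) k * u k)%N.
  by rewrite [RHS]big_nat_recl // mul0n add0n.
rewrite -(@big_nat_trunc _ _ _ N.+2 N.+3 (fun k => (n - (m + k)) * u k)%N) //; last first.
  by move=> k /andP[? ?]; rewrite /u bin_small ?mul0n ?muln0 //; rewrite /n; lia.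
rewrite -big_split big_distrr /=; apply: eq_bigr => k _; rewrite -mulnDl /u.
case: (leqP (m + k) n) => [le_mkn | lt_nmk]; last by rewrite bin_small ?mul0n ?muln0.
by congr (_ * _)%N; rewrite /n; lia.
Qed.

Lemma stirling2_split_singletons m N : stirling2 (N + m) N = split_singletons m N.
Proof.
elim: m N => [|m IHm] N; first by rewrite split_singletons0 addn0 stirling2nn.
elim: N => [|N IHN]; first by rewrite /split_singletons big_nat1 addn0 stirling2ndS0 muln0.
rewrite split_singletonsSS -IHN -IHm addSn -addSnnS /= addnC.
by congr (_ + _)%N; rewrite addSnnS.
Qed.

Lemma stirling2_assoc m N : (0 < m)%N ->
  stirling2 (N + m) N = \sum_(1 <= k < m.+1) 'C(N + m, m + k) * stirling2nd (m + k) k.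
Proof.
move=> m_gt0; rewrite stirling2_split_singletons.
rewrite (@split_singletons_widen _ _ (N + m).+1) ?ltnS ?leq_addr //.
rewrite (@big_nat_trunc _ _ _ m.+1) ?ltnS ?leq_addl //; last first.
  by move=> k /andP[lt_mk _]; rewrite stirling2nd_small ?muln0 //; lia.
rewrite big_ltn // addn0; case: m m_gt0 => // m _.
by rewrite stirling2ndS0 muln0.
Qed.

Local Open Scope ring_scope.

Section BinomPowerSum.
Variable R : comPzRingType.

Definition binom_power_sum (p N : nat) : R :=
  \sum_(0 <= n < N.+1) (-1) ^+ n * 'C(N, n)%:R * n%:R ^+ p.

Lemma binom_power_sumSS p N : binom_power_sum p.+1 N.+1 =
  N.+1%:R * (binom_power_sum p N.+1 - binom_power_sum p N).
Proof.
pose t : R := \sum_(0 <= j < N.+1) (-1) ^+ j.+1 * 'C(N, j)%:R * j.+1%:R ^+ p.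
have pascal : binom_power_sum p N.+1 = binom_power_sum p N + t.
  rewrite /binom_power_sum big_nat_recl // [X in _ = X + _]big_nat_recl //.
  under eq_bigr => j _ do rewrite binS natrD mulrDr mulrDl.
  by rewrite big_split /= !bin0 addrA big_nat_recr //= bin_small // mulr0 mul0r addr0.
have absorb : binom_power_sum p.+1 N.+1 = N.+1%:R * t.
  rewrite /binom_power_sum big_nat_recl // expr0n mulr0 add0r mulr_sumr.
  apply: eq_bigr => j _.
  have bin : 'C(N.+1, j.+1)%:R * j.+1%:R = N.+1%:R * 'C(N, j)%:R :> R.
    by rewrite -!natrM mul_bin_diag mulnC.
  transitivity ((-1) ^+ j.+1 * ('C(N.+1, j.+1)%:R * j.+1%:R) * j.+1%:R ^+ p : R).
    by rewrite [_ ^+ p.+1]exprS; ring.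
  by rewrite bin; ring.
by rewrite absorb pascal [_ + t]addrC addrK.
Qed.

Lemma binom_power_sum_stirling2 p N :
  binom_power_sum p N = (-1) ^+ N * N`!%:R * (stirling2 p N)%:R.
Proof.
elim: p N => [|p IH] [|N].
- by rewrite /binom_power_sum big_nat1 !mulr1.
- have := exprD1n (-1 : R) N.+1; rewrite addNr expr0n /= => /esym zero.
  rewrite mulr0 -[RHS]zero /binom_power_sum big_mkord.
  by apply: eq_bigr => i _; rewrite expr0 mulr1 mulr_natr.
- by rewrite /binom_power_sum big_nat1 expr0n !mulr0.
- by rewrite binom_power_sumSS !IH /= factS natrM natrD natrM exprS; ring.
Qed.

End BinomPowerSum.

Lemma fmulE f g n : fmul f g n = \sum_(0 <= i < n.+1) f i * g (n - i)%N.
Proof. by rewrite /fmul big_mkord. Qed.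

Lemma fXmulE f n : fmul fX f n = if n is n'.+1 then f n' else 0.
Proof.
rewrite fmulE big_nat_recl // mul0r add0r; case: n => [|n]; first by rewrite big_geq.
rewrite big_nat_recl // mul1r subn1 big1_seq ?addr0 // => i _.
by rewrite mul0r.
Qed.

Lemma zetaE n : zeta n = (n != 0%N)%:R.
Proof. by rewrite /zeta fXmulE; case: n. Qed.

Lemma fone_add_zetaE n : fadd fone zeta n = 1.
Proof. by rewrite /fadd /fone zetaE; case: n => [|n]; rewrite ?addr0 ?add0r. Qed.

Lemma flamexpE n : flamexp n = if n is n'.+1 then fexpneg n' else 0.
Proof. exact: fXmulE. Qed.

Lemma natr_fact_neq0 (R : numDomainType) n : n`!%:R != 0 :> R.
Proof. by rewrite pnatr_eq0 -lt0n fact_gt0. Qed.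

Lemma exp_series_conv (R : numFieldType) (a : R) r :
  \sum_(0 <= i < r.+1) (-1) ^+ i / i`!%:R * ((- a) ^+ (r - i) / (r - i)`!%:R)
  = (- (a + 1)) ^+ r / r`!%:R.
Proof.
rewrite [- (a + 1)]opprD exprDn big_mkord mulr_suml; apply: eq_bigr => i _.
have fact : 'C(r, i)%:R * (i`!%:R * (r - i)`!%:R) = r`!%:R :> R.
  by rewrite -!natrM bin_fact // -ltnS ltn_ord.
rewrite -fact -mulr_natr; field.
by rewrite !natr_fact_neq0 pnatr_eq0 -lt0n bin_gt0 -ltnS ltn_ord.
Qed.

Lemma fpow_flamexp n N : fpow flamexp n N =
  if (n <= N)%N then (- n%:R) ^+ (N - n) / (N - n)`!%:R else 0.
Proof.
elim: n N => [|n IH] N.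
  by rewrite /= /fone subn0 oppr0 expr0n; case: N => [|N] //=; rewrite mul0r.
rewrite /= fmulE big_nat_recl // flamexpE mul0r add0r.
case: N => [|N]; first by rewrite big_geq.
under eq_bigr => i _ do rewrite flamexpE subSS IH.
rewrite ltnS subSS -natr1 -exp_series_conv.
case: (leqP n N) => [le_nN | lt_Nn]; last first.
  by rewrite big1 // => i _; rewrite leqNgt (leq_ltn_trans (leq_subr i N)) ?mulr0.
rewrite (@big_nat_trunc _ _ _ (N - n).+1) ?ltnS ?leq_subr //.
  apply: eq_big_nat => i /andP[_]; rewrite ltnS => le_i.
  by rewrite /fexpneg (_ : n <= N - i)%N 1?subnAC //; lia.
by move=> i /andP[? ?]; rewrite (_ : n <= N - i = false)%N ?mulr0 //; lia.
Qed.

Lemma Rser_opp m n : (0 < m)%N -> Rser (- m%:Z) n = n%:R ^+ (n + m) / n`!%:R.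
Proof.
move=> m_gt0; case: n => [|n]; first by rewrite expr0n gtn_eqF ?mul0r.
by rewrite /Rser opprK -PoszD -exprnP.
Qed.

Lemma Rser_opp_flamexp m n N : (0 < m)%N -> (n <= N)%N ->
  Rser (- m%:Z) n * fpow flamexp n N =
  (-1) ^+ N / N`!%:R * ((-1) ^+ n * 'C(N, n)%:R * n%:R ^+ (N + m)).
Proof.
move=> m_gt0 le_nN; rewrite Rser_opp // fpow_flamexp le_nN exprNn.
have sign : (-1) ^+ (N - n) = (-1) ^+ N * (-1) ^+ n :> rat.
  by rewrite exprB ?unitrN1 // invr_sign.
have pow : n%:R ^+ (n + m) * n%:R ^+ (N - n) = n%:R ^+ (N + m) :> rat.
  by rewrite -exprD; congr (_ ^+ _); lia.
have fact : 'C(N, n)%:R * (n`!%:R * (N - n)`!%:R) = N`!%:R :> rat.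
  by rewrite -!natrM bin_fact.
rewrite sign -pow -fact; field.
by rewrite !natr_fact_neq0 pnatr_eq0 -lt0n bin_gt0 le_nN.
Qed.

Lemma Gser_opp_stirling2 m N : (0 < m)%N -> Gser (- m%:Z) N = (stirling2 (N + m) N)%:R.
Proof.
move=> m_gt0; rewrite /Gser /fcomp.
rewrite -(big_mkord xpredT (fun n => Rser (- m%:Z) n * fpow flamexp n N)).
under eq_big_nat => n /andP[_ lt_nN] do rewrite Rser_opp_flamexp //.
rewrite -mulr_sumr -/(binom_power_sum _ (N + m) N) binom_power_sum_stirling2.
by rewrite mulrA mulrACA -expr2 sqrr_sign mulVf ?natr_fact_neq0 // !mul1r.
Qed.

Lemma fpowS f k : fpow f k.+1 = fmul f (fpow f k).
Proof. by []. Qed.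

Lemma hockey_stick j r : (\sum_(0 <= s < r.+1) 'C(s + j, s) = 'C(r + j.+1, r))%N.
Proof.
elim: r => [|r IH]; first by rewrite big_nat1 !bin0.
by rewrite big_nat_recr //= IH addSnnS [in RHS]addSn binS addnC.
Qed.

Lemma fpow_one_add_zeta j r : fpow (fadd fone zeta) j.+1 r = 'C(r + j, r)%:R.
Proof.
elim: j r => [|j IH] r.
  rewrite /= fmulE big_nat_recr //= fone_add_zetaE subnn mulr1 addn0 binn.
  rewrite big1_seq ?add0r // => i; rewrite mem_index_iota => lt_ir.
  by rewrite /fone subn_eq0 (ltn_geF lt_ir) mulr0.
rewrite fpowS fmulE; under eq_bigr => i _ do rewrite fone_add_zetaE mul1r IH.
rewrite -natr_sum big_nat_rev /= -hockey_stick; congr (_%:R).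
by apply: eq_big_nat => i /andP[_ lt_ir]; rewrite add0n subSS subKn.
Qed.

Definition agree_upto N (f : fps) (p : {poly rat}) := forall i, (i <= N)%N -> f i = p`_i.

Lemma agree_fmul {N f g p q} :
  agree_upto N f p -> agree_upto N g q -> agree_upto N (fmul f g) (p * q).
Proof.
move=> fp gq n le_nN; rewrite coefM; apply: eq_bigr => i _.
have le_in : (i <= n)%N by rewrite -ltnS.
by rewrite fp ?gq //; lia.
Qed.

Lemma agree_fpow {N f p} k : agree_upto N f p -> agree_upto N (fpow f k) (p ^+ k).
Proof.
move=> fp; elim: k => [|k IH]; first by move=> i _; rewrite /= /fone coef1.
by rewrite exprS; apply: agree_fmul.
Qed.

Definition geom_poly N : {poly rat} := \poly_(i < N.+1) 1.

Lemma agree_one_add_zeta N : agree_upto N (fadd fone zeta) (geom_poly N).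
Proof. by move=> i le_iN; rewrite fone_add_zetaE coef_poly ltnS le_iN. Qed.

Lemma agree_zeta N : agree_upto N zeta (geom_poly N - 1).
Proof.
move=> i le_iN; rewrite zetaE coefB coef_poly coef1 ltnS le_iN.
by case: i {le_iN} => [|i]; rewrite ?subrr ?subr0.
Qed.

Lemma mulX_geom_poly N : 'X * geom_poly N = geom_poly N - 1 + 'X ^+ N.+1.
Proof.
apply/polyP => i; rewrite coefXM coefD coefB coefXn coef1 !coef_poly.
case: i => [|i] /=; first by ring.
by rewrite !ltnS eqSS; case: ltngtP => _ /=; ring.
Qed.

Lemma coef_mul_expr_eqmod (R : comNzRingType) N (s p q r : {poly R}) k :
  q = p + 'X ^+ N.+1 * r -> (s * p ^+ k)`_N = (s * q ^+ k)`_N.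
Proof.
move=> def_q; set S := \sum_(i < k) q ^+ (k.-1 - i) * p ^+ i.
have diff : q ^+ k - p ^+ k = 'X ^+ N.+1 * (r * S).
  by rewrite subrXX {1}def_q addrC addKr mulrA.
by rewrite -(subrK (p ^+ k) (q ^+ k)) diff mulrDr coefD mulrCA coefXnM ltnSn add0r.
Qed.

Lemma coef_geom_poly_zeta N j k :
  (geom_poly N ^+ j.+1 * (geom_poly N - 1) ^+ k)`_N = 'C(N + j, j + k)%:R.
Proof.
rewrite (coef_mul_expr_eqmod _ N _ _ ('X * geom_poly N) 1); last first.
  by rewrite mulr1 mulX_geom_poly.
rewrite exprMn mulrCA -exprD coefXnM; case: ltnP => [lt_Nk | le_kN].
  by rewrite bin_small //; lia.
rewrite -(agree_fpow _ (agree_one_add_zeta N)) ?leq_subr // addSn fpow_one_add_zeta.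
by rewrite -bin_sub ?leq_addr //; congr (_%:R); congr 'C(_, _); lia.
Qed.

Theorem proposition1 (m : nat) : (0 < m)%N ->
  Gser (- (m%:Z)) =1
  fmul (fpow (fadd fone zeta) m.+1)
       (fun n => \sum_(1 <= k < m.+1)
                   (stirling2nd (m + k) k)%:R * fpow zeta k n).
Proof.
move=> m_gt0 N; rewrite Gser_opp_stirling2 // stirling2_assoc // natr_sum.
pose zeta_sum := \sum_(1 <= k < m.+1) (stirling2nd (m + k) k)%:R *: (geom_poly N - 1) ^+ k.
rewrite (agree_fmul (agree_fpow m.+1 (agree_one_add_zeta N)) (q := zeta_sum)) //.
  rewrite mulr_sumr coef_sum; apply: eq_bigr => k _.
  by rewrite -scalerAr coefZ coef_geom_poly_zeta natrM mulrC.
move=> i le_iN; rewrite coef_sum; apply: eq_bigr => k _.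
by rewrite coefZ (agree_fpow _ (agree_zeta N)).
Qed.
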